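(* Let $G$ be an $n$-vertex graph of density $p$, and let $\mathcal Q,\mathcal P$ be partitions of $V(G)$ with $\mathcal Q$ refining $\mathcal P$. If $\mathcal D(\mathcal Q,\mathcal P)\ge xpn^2$ (for some $x\ge 0$), then $\mathcal H(\mathcal Q)-\mathcal H(\mathcal P)\ge 2x^2p$.
   Context: The density of $G=(V,E)$ is $2|E|/|V|^2$. $e(X,Y)$ is the number of ordered pairs $(u,v)\in X\times Y$ with $uv\in E(G)$ and $d(X,Y)=e(X,Y)/(|X||Y|)$. $H(x)=x\ln x$, $H(0)=0$. For a partition $\mathcal P$ of $V(G)$, $\mathcal H(\mathcal P)=\sum_{V,V'\in\mathcal P}\frac{|V||V'|}{n^2}H(d(V,V'))$, summed over ordered pairs. For $\mathcal P=\{V_1,\dots,V_k\}$ and a refinement $\mathcal Q$, $\mathcal Q|_{V_i}$ denotes the partition of $V_i$ induced by $\mathcal Q$, and $$\mathcal D(\mathcal Q,\mathcal P)=\frac12\sum_{i,j=1}^k\ \sum_{U\in\mathcal Q|_{V_i},\,U'\in\mathcal Q|_{V_j}}|U||U'|\,|d(U,U')-d(V_i,V_j)|.$$ *)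

From HB Require Import structures.
From mathcomp Require Import all_boot all_order all_algebra.
From mathcomp Require Import reals exp.
Set Implicit Arguments. Unset Strict Implicit. Unset Printing Implicit Defensive.
Import Order.TTheory GRing.Theory Num.Theory.
Local Open Scope ring_scope.

Section Defs.
Variables (R : realType) (V : finType) (adj : rel V).

Definition edges_between (X Y : {set V}) : nat :=
  #|[set uv : V * V | [&& uv.1 \in X, uv.2 \in Y & adj uv.1 uv.2]]|.

Definition pair_density (X Y : {set V}) : R :=
  (edges_between X Y)%:R / (#|X| * #|Y|)%:R.

(* density of G: 2|E|/|V|^2 = e(V,V)/|V|^2 for a simple graph *)
Definition graph_density : R :=
  (edges_between [set: V] [set: V])%:R / (#|V| ^ 2)%:R.

Definition Hfun (x : R) : R := if x == 0 then 0 else x * ln x.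

Definition calH (P : {set {set V}}) : R :=
  \sum_(A in P) \sum_(B in P)
     ((#|A| * #|B|)%:R / (#|V| ^ 2)%:R) * Hfun (pair_density A B).

Definition refines (Q P : {set {set V}}) : Prop :=
  forall U, U \in Q -> exists2 A, A \in P & U \subset A.

Definition calD (Q P : {set {set V}}) : R :=
  2^-1 * \sum_(A in P) \sum_(B in P)
     \sum_(U in Q | U \subset A) \sum_(U' in Q | U' \subset B)
       (#|U| * #|U'|)%:R * `|pair_density U U' - pair_density A B|.

End Defs.

(* For y >= 0 and d > 0, the Bregman divergence of H(t) = t ln t satisfies
   H(y) - H(d) - H'(d)(y - d) >= 3(y - d)^2 / (2(y + 2d)) >= l|y - d| - l^2 (y + 2d) / 6
   for every l >= 0, the second step being AM-GM.  Weight this by |U||U'| over the blocks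
   U, U' of Q inside A, B in P: the weighted mean of d(U,U') is d(A,B), so the linear terms
   cancel and the weighted sum of y + 2d is 3 e(A,B).  Summing over A, B gives
   n^2 (H(Q) - H(P)) >= 2 l D(Q,P) - l^2 p n^2 / 2, and l = 2x yields the claim. *)

From HB Require Import structures.
From mathcomp Require Import all_boot all_order all_algebra.
From mathcomp Require Import reals exp.
From mathcomp Require boolp functions normedtype derive realfun.
From mathcomp Require Import ring lra.
Import Order.TTheory GRing.Theory Num.Theory.
Local Open Scope ring_scope.

Module XLogXBounds.
Import boolp functions normedtype derive realfun.
Import numFieldNormedType.Exports.

Section Calculus.
Variable R : realType.

Lemma derive_ndecr_pos {f df : R -> R} {a b : R} :
  (forall x : R, 0 < x -> is_derive x 1 f (df x)) -> 0 < a -> a <= b ->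
  (forall x, a < x < b -> 0 <= df x) -> f a <= f b.
Proof.
move=> f_derive a_gt0 ab df_ge0.
have f'E x : a <= x -> is_derive x 1 f (df x).
  by move=> ax; apply: f_derive; exact: lt_le_trans ax.
apply: (@ger0_derive1_ndecr R f a b) => //.
- move=> x; rewrite in_itv /= => /andP[ax _].
  by have f'x := f'E x (ltW ax); exact: ex_derive.
- move=> x; rewrite in_itv /= => /andP[ax xb].
  have f'x := f'E x (ltW ax).
  by rewrite derive1E derive_val; apply: df_ge0; rewrite ax.
- apply: derivable_within_continuous => x; rewrite in_itv /= => /andP[ax _].
  by have f'x := f'E x ax; exact: ex_derive.
Qed.

Lemma derive_nincr_pos {f df : R -> R} {a b : R} :
  (forall x : R, 0 < x -> is_derive x 1 f (df x)) -> 0 < a -> a <= b ->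
  (forall x, a < x < b -> df x <= 0) -> f b <= f a.
Proof.
move=> f_derive a_gt0 ab df_le0; rewrite -lerN2.
apply: (@derive_ndecr_pos (- f) (fun x => - df x) a b) => // [x x_gt0|x /df_le0].
  exact/is_deriveN/f_derive.
by rewrite oppr_ge0.
Qed.

Lemma derive_min_at1 {f df : R -> R} :
  (forall x : R, 0 < x -> is_derive x 1 f (df x)) ->
  (forall x, 0 < x -> 0 <= (x - 1) * df x) -> forall s, 0 < s -> f 1 <= f s.
Proof.
move=> f_derive df_sign s s_gt0; case: (lerP 1 s) => [s_ge1|s_lt1].
  apply: derive_ndecr_pos f_derive _ s_ge1 _ => // x /andP[x_gt1 _].
  have x_gt0 : 0 < x by exact: lt_trans ltr01 x_gt1.
  by rewrite -(@pmulr_rge0 _ (x - 1)) ?df_sign // subr_gt0.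
apply: (derive_nincr_pos f_derive s_gt0 (ltW s_lt1)) => x /andP[s_lt_x x_lt1].
have x_gt0 : 0 < x by exact: lt_trans s_gt0 s_lt_x.
by rewrite -(@nmulr_rge0 _ (x - 1)) ?df_sign // subr_lt0.
Qed.

Lemma one_subV_le_ln (x : R) : 0 < x -> 1 - x^-1 <= ln x.
Proof.
move=> x_gt0; have xV_gt0 : 0 < x^-1 by rewrite invr_gt0.
have : ln x^-1 <= x^-1 - 1.
  by have := @le_ln1Dx R (x^-1 - 1); rewrite addrCA subrr addr0; apply; lra.
by rewrite lnV ?posrE //; lra.
Qed.

Definition log_mean_gap (s : R) := (s + 1) * ln s - 2 * (s - 1).

Lemma is_derive_log_mean_gap (x : R) :
  0 < x -> is_derive x 1 log_mean_gap (ln x + x^-1 - 1).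
Proof.
move=> x_gt0; have := @is_derive1_ln R x x_gt0.
have -> : log_mean_gap = (@id R + cst 1) * (@ln R) - cst 2 * (@id R - cst 1).
  by apply/funext => s.
move=> ln'x; apply: is_derive_eq.
by rewrite /= -![_ *: _]/(_ * _) mulrDl divff ?gt_eqF // mul1r; lra.
Qed.

Lemma log_mean_gap_le {a b : R} :
  0 < a -> a <= b -> log_mean_gap a <= log_mean_gap b.
Proof.
move=> a_gt0 ab; apply: (derive_ndecr_pos is_derive_log_mean_gap a_gt0 ab).
move=> x /andP[a_lt_x _]; have := one_subV_le_ln x (lt_trans a_gt0 a_lt_x); lra.
Qed.

Lemma log_mean_gap_sign (s : R) : 0 < s -> 0 <= (s - 1) * log_mean_gap s.
Proof.
have k1 : log_mean_gap 1 = 0 by rewrite /log_mean_gap ln1; ring.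
move=> s_gt0; case: (lerP 1 s) => [s_ge1|s_lt1].
  have := log_mean_gap_le ltr01 s_ge1; rewrite k1 => k_ge0.
  by apply: mulr_ge0 => //; rewrite subr_ge0.
have := log_mean_gap_le s_gt0 (ltW s_lt1); rewrite k1 => k_le0.
by apply: mulr_le0 => //; rewrite subr_le0 ltW.
Qed.

(* At s = y / d and scaled by d^2, [0 <= xlogx_gap s] is the first inequality above. *)
Definition xlogx_gap (s : R) :=
  2 * (s + 2) * (s * ln s - s + 1) - 3 * (s - 1) ^+ 2.

Lemma is_derive_xlogx_gap (x : R) :
  0 < x -> is_derive x 1 xlogx_gap (4 * log_mean_gap x).
Proof.
move=> x_gt0; have := @is_derive1_ln R x x_gt0.
have -> : xlogx_gap = cst 2 * (@id R + cst 2) * (@id R * (@ln R) - @id R + cst 1)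
    - cst 3 * ((@id R - cst 1) * (@id R - cst 1)).
  by apply/funext => s; rewrite /xlogx_gap expr2.
move=> ln'x; apply: is_derive_eq.
by rewrite /= -![_ *: _]/(_ * _) divff ?gt_eqF // /log_mean_gap !fctE; ring.
Qed.

Lemma xlogx_gap_ge0 (s : R) : 0 < s -> 0 <= xlogx_gap s.
Proof.
move=> s_gt0; have <- : xlogx_gap 1 = 0 by rewrite /xlogx_gap ln1; ring.
apply: (derive_min_at1 (df := fun x => 4 * log_mean_gap x) is_derive_xlogx_gap) => //.
by move=> x x_gt0; rewrite mulrCA mulr_ge0 ?log_mean_gap_sign.
Qed.

End Calculus.
End XLogXBounds.
Import XLogXBounds.

Section Entropy.
Context {R : realType}.

Lemma HfunE (x : R) : Hfun x = x * ln x.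
Proof. by rewrite /Hfun; case: eqP => [->|]; rewrite ?mul0r. Qed.

Lemma Hfun_bregman_sqr_le {y d : R} : 0 <= y -> 0 < d ->
  3 * (y - d) ^+ 2 <= 2 * (y + 2 * d) * (Hfun y - Hfun d - (ln d + 1) * (y - d)).
Proof.
rewrite !HfunE => y_ge0 d_gt0; case: (ltrgt0P y) y_ge0 => // [y_gt0|->] _; last first.
  by rewrite ln0 // !mulr0; nra.
set s := y / d; have s_gt0 : 0 < s by exact: divr_gt0.
have yE : y = s * d by rewrite divfK ?gt_eqF.
have lnyE : ln y = ln s + ln d by rewrite yE lnM ?posrE.
have := mulr_ge0 (mulr_ge0 (ltW d_gt0) (ltW d_gt0)) (@xlogx_gap_ge0 R _ s_gt0).
by rewrite /xlogx_gap lnyE; nra.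
Qed.

Lemma Hfun_bregman_ge (y d l : R) : 0 <= y -> 0 < d -> 0 <= l ->
  l * `|y - d| - l ^+ 2 / 6 * (y + 2 * d)
    <= Hfun y - Hfun d - (ln d + 1) * (y - d).
Proof.
move=> y_ge0 d_gt0 l_ge0; have := Hfun_bregman_sqr_le y_ge0 d_gt0.
rewrite -[(y - d) ^+ 2]real_normK ?num_real //.
have m_gt0 : 0 < y + 2 * d by lra.
have := sqr_ge0 (3 * `|y - d| - l * (y + 2 * d)).
nra.
Qed.

Lemma sum_Hfun_gap_ge {I : finType} {S : pred I} {w y : I -> R} {c l : R} :
  (forall i, S i -> 0 <= w i) -> (forall i, S i -> 0 <= y i) -> 0 <= c -> 0 <= l ->
  \sum_(i | S i) w i * y i = (\sum_(i | S i) w i) * c ->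
  l * (\sum_(i | S i) w i * `|y i - c|) - l ^+ 2 / 2 * ((\sum_(i | S i) w i) * c)
    <= \sum_(i | S i) w i * Hfun (y i) - (\sum_(i | S i) w i) * Hfun c.
Proof.
move=> w_ge0 y_ge0 c_ge0 l_ge0 mean_c.
case: (ltrgt0P c) c_ge0 => // [c_gt0|c0] _; last first.
  rewrite c0 mulr0 in mean_c; rewrite c0 [Hfun 0]HfunE !(mul0r, mulr0, subr0).
  have wy0 := psumr_eq0P (fun i Si => mulr_ge0 (w_ge0 i Si) (y_ge0 i Si)) mean_c.
  rewrite (eq_bigr (fun i => w i * y i)) => [|i Si]; last by rewrite subr0 ger0_norm ?y_ge0.
  rewrite mean_c big1 => [|i Si]; last by rewrite HfunE mulrA wy0 ?mul0r.
  by rewrite mulr0.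
set W := \sum_(i | S i) w i; set c' := ln c + 1.
have gap_ge0 : 0 <= \sum_(i | S i) w i * (Hfun (y i) - Hfun c - c' * (y i - c)
    - (l * `|y i - c| - l ^+ 2 / 6 * (y i + 2 * c))).
  apply: sumr_ge0 => i Si; rewrite mulr_ge0 ?w_ge0 // subr_ge0.
  exact: Hfun_bregman_ge (y_ge0 i Si) c_gt0 l_ge0.
have expand : \sum_(i | S i) w i * (Hfun (y i) - Hfun c - c' * (y i - c)
    - (l * `|y i - c| - l ^+ 2 / 6 * (y i + 2 * c))) =
  \sum_(i | S i) w i * Hfun (y i) + (- Hfun c + c' * c + l ^+ 2 / 3 * c) * W
  + (l ^+ 2 / 6 - c') * (\sum_(i | S i) w i * y i)
  + (- l) * (\sum_(i | S i) w i * `|y i - c|).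
  by rewrite /W !mulr_sumr -!big_split /=; apply: eq_bigr => i _; field.
by rewrite expand mean_c -/W in gap_ge0; lra.
Qed.

End Entropy.

Section Partitions.
Context {V : finType}.
Implicit Types (P Q : {set {set V}}) (A B U : {set V}).

Lemma trivIset_sub_uniq P A B U :
  trivIset P -> A \in P -> B \in P -> U != set0 -> U \subset A -> U \subset B ->
  A = B.
Proof.
move=> trivP AP BP /set0Pn[u uU] UA UB.
by rewrite -(def_pblock trivP AP (subsetP UA u uU)) (def_pblock trivP BP (subsetP UB u uU)).
Qed.

Lemma partition_refines_block {P Q A} :
  partition P [set: V] -> partition Q [set: V] -> refines Q P -> A \in P ->
  partition [set U in Q | U \subset A] A.
Proof.
move=> /and3P[_ trivP _] /and3P[/eqP covQ trivQ Q_n0] QP AP; apply/and3P; split.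
- apply/eqP/setP => v; apply/bigcupP/idP => [[U]|vA].
    by rewrite inE => /andP[_ UA] /(subsetP UA).
  have vQ : v \in cover Q by rewrite covQ inE.
  have vQv : v \in pblock Q v by rewrite mem_pblock.
  have [A' A'P QvA'] := QP _ (pblock_mem vQ).
  exists (pblock Q v) => //; rewrite inE pblock_mem //=.
  by rewrite -(def_pblock trivP AP vA) (def_pblock trivP A'P (subsetP QvA' v vQv)).
- by apply: trivIsetS trivQ; apply/subsetP => U; rewrite inE => /andP[].
- by rewrite inE negb_and Q_n0.
Qed.

Lemma big_refines {T : Type} {idx : T} {op : Monoid.com_law idx} {P Q}
    (F : {set V} -> T) :
  partition P [set: V] -> partition Q [set: V] -> refines Q P ->
  \big[op/idx]_(U in Q) F U = \big[op/idx]_(A in P) \big[op/idx]_(U in Q | U \subset A) F U.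
Proof.
move=> /and3P[_ trivP _] /and3P[_ _ Q_n0] QP.
rewrite (exchange_big_dep (mem Q)) /=; last by move=> A U _ /andP[].
apply: eq_bigr => U UQ; have [A AP UA] := QP U UQ.
have U_n0 : U != set0 by apply: contraNneq Q_n0 => <-.
rewrite (big_pred1 A) // => A' /=; rewrite UQ /=.
by apply/andP/eqP => [[A'P UA']|->]; first exact: trivIset_sub_uniq trivP A'P AP U_n0 UA' UA.
Qed.

End Partitions.

Section Graph.
Context {R : realType} {V : finType} (adj : rel V).
Local Notation e := (edges_between adj).
Local Notation d := (pair_density R adj).
Implicit Types (P Q : {set {set V}}) (A B : {set V}).

Lemma edges_betweenE (X Y : {set V}) :
  (e X Y)%:R = \sum_(u in X) \sum_(v in Y) (adj u v)%:R :> R.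
Proof.
rewrite /edges_between -sum1_card natr_sum pair_big /= big_mkcond [RHS]big_mkcond.
by apply: eq_bigr => -[u v] _; rewrite inE /=; case: (u \in X); case: (v \in Y); case: adj.
Qed.

Lemma edges_between_partition {PA PB : {set {set V}}} {A B : {set V}} :
  partition PA A -> partition PB B ->
  (e A B)%:R = \sum_(U in PA) \sum_(U' in PB) (e U U')%:R :> R.
Proof.
move=> /and3P[/eqP <- trivA _] /and3P[/eqP <- trivB _].
rewrite edges_betweenE big_trivIset //; apply: eq_bigr => U _.
rewrite (eq_bigr _ (fun u _ => big_trivIset _ trivB)) /= exchange_big /=.
by apply: eq_bigr => U' _; rewrite edges_betweenE.
Qed.

Lemma edges_between_le (X Y : {set V}) : (e X Y <= #|X| * #|Y|)%N.
Proof.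
rewrite -cardsX; apply: subset_leq_card; apply/subsetP => -[u v].
by rewrite !inE /= => /and3P[-> ->].
Qed.

Lemma edges_between_density (X Y : {set V}) :
  (e X Y)%:R = (#|X| * #|Y|)%:R * d X Y :> R.
Proof.
have [XY0|XY_gt0] := posnP (#|X| * #|Y|).
  by move: (edges_between_le X Y); rewrite XY0 leqn0 => /eqP ->; rewrite mul0r.
by rewrite /pair_density mulrC divfK // pnatr_eq0 -lt0n.
Qed.

Lemma pair_density_ge0 (X Y : {set V}) : 0 <= d X Y.
Proof. exact: divr_ge0. Qed.

Lemma card_mul_partition {PA PB : {set {set V}}} {A B : {set V}} :
  partition PA A -> partition PB B ->
  (#|A| * #|B|)%:R = \sum_(U in PA) \sum_(U' in PB) (#|U| * #|U'|)%:R :> R.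
Proof.
move=> /card_partition -> /card_partition ->.
rewrite natrM !natr_sum mulr_suml; apply: eq_bigr => U _.
by rewrite mulr_sumr; apply: eq_bigr => U' _; rewrite natrM.
Qed.

Lemma Hfun_partition_gap_ge {PA PB : {set {set V}}} {A B : {set V}} {l : R} :
  partition PA A -> partition PB B -> 0 <= l ->
  l * (\sum_(U in PA) \sum_(U' in PB) (#|U| * #|U'|)%:R * `|d U U' - d A B|)
    - l ^+ 2 / 2 * (e A B)%:R
  <= \sum_(U in PA) \sum_(U' in PB) (#|U| * #|U'|)%:R * Hfun (d U U')
    - (#|A| * #|B|)%:R * Hfun (d A B).
Proof.
move=> pA pB l_ge0.
have mean : \sum_(U in PA) \sum_(U' in PB) (#|U| * #|U'|)%:R * d U U'
    = (#|A| * #|B|)%:R * d A B.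
  rewrite -edges_between_density (edges_between_partition pA pB).
  by apply: eq_bigr => U _; apply: eq_bigr => U' _; rewrite edges_between_density.
rewrite edges_between_density (card_mul_partition pA pB) !pair_big /= in mean *.
by apply: (sum_Hfun_gap_ge _ _ _ l_ge0 mean) => *; rewrite ?ler0n ?pair_density_ge0.
Qed.

Definition block_entropy Q A B : R :=
  \sum_(U in Q | U \subset A) \sum_(U' in Q | U' \subset B)
    (#|U| * #|U'|)%:R * Hfun (d U U').

Definition block_deviation Q A B : R :=
  \sum_(U in Q | U \subset A) \sum_(U' in Q | U' \subset B)
    (#|U| * #|U'|)%:R * `|d U U' - d A B|.

Lemma calDE Q P : calD R adj Q P = 2^-1 * \sum_(A in P) \sum_(B in P) block_deviation Q A B.
Proof. by []. Qed.

Lemma calHE P : calH R adj P =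
  (#|V| ^ 2)%:R^-1 * \sum_(A in P) \sum_(B in P) (#|A| * #|B|)%:R * Hfun (d A B).
Proof.
rewrite mulr_sumr; apply: eq_bigr => A _; rewrite mulr_sumr; apply: eq_bigr => B _.
by rewrite mulrCA mulrA.
Qed.

Lemma Hfun_refines_gap_ge {Q P A B} {l : R} :
  partition P [set: V] -> partition Q [set: V] -> refines Q P ->
  A \in P -> B \in P -> 0 <= l ->
  l * block_deviation Q A B - l ^+ 2 / 2 * (e A B)%:R
    <= block_entropy Q A B - (#|A| * #|B|)%:R * Hfun (d A B).
Proof.
move=> hP hQ QP AP BP l_ge0.
have := Hfun_partition_gap_ge (partition_refines_block hP hQ QP AP)
  (partition_refines_block hP hQ QP BP) l_ge0.
by rewrite !big_set /=; do 2 rewrite (eq_bigr _ (fun U _ => big_set _ _ _ _)) /=.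
Qed.

Lemma calH_refines_gap Q P :
  partition P [set: V] -> partition Q [set: V] -> refines Q P ->
  calH R adj Q - calH R adj P = (#|V| ^ 2)%:R^-1 *
    \sum_(A in P) \sum_(B in P) (block_entropy Q A B - (#|A| * #|B|)%:R * Hfun (d A B)).
Proof.
move=> hP hQ QP; rewrite !calHE -mulrBr (big_refines _ hP hQ QP) -sumrB.
congr (_ * _); apply: eq_bigr => A _.
by rewrite (eq_bigr _ (fun U _ => big_refines _ hP hQ QP)) exchange_big -sumrB.
Qed.

Lemma calH_refines_gap_ge {Q P} {l : R} :
  partition P [set: V] -> partition Q [set: V] -> refines Q P -> 0 <= l ->
  l * (2 * calD R adj Q P) / (#|V| ^ 2)%:R - l ^+ 2 / 2 * graph_density R adj
    <= calH R adj Q - calH R adj P.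
Proof.
move=> hP hQ QP l_ge0; rewrite calH_refines_gap // calDE mulVKf ?pnatr_eq0 //.
rewrite /graph_density (edges_between_partition hP hP) mulrA -mulrBl mulrC.
apply: ler_wpM2l; first by rewrite invr_ge0.
rewrite mulr_sumr [l ^+ 2 / 2 * _]mulr_sumr -sumrB; apply: ler_sum => A AP.
rewrite mulr_sumr [l ^+ 2 / 2 * _]mulr_sumr -sumrB; apply: ler_sum => B BP.
exact: Hfun_refines_gap_ge hP hQ QP AP BP l_ge0.
Qed.

End Graph.

Theorem lemma3p6 (R : realType) (V : finType) (adj : rel V)
  (adj_sym : symmetric adj) (adj_irr : irreflexive adj)
  (Q P : {set {set V}})
  (hP : partition P [set: V]) (hQ : partition Q [set: V])
  (hQP : refines Q P) (x : R) (hx : 0 <= x) :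
  calD R adj Q P >= x * graph_density R adj * (#|V| ^ 2)%:R ->
  calH R adj Q - calH R adj P >= 2 * x ^+ 2 * graph_density R adj.
Proof.
move=> hD; set N : R := (#|V| ^ 2)%:R; set p := graph_density R adj.
have dev_ge : x * p <= calD R adj Q P / N.
  have [N0|N_neq0] := eqVneq N 0.
    by rewrite /p /graph_density -/N N0 invr0 !mulr0.
  by rewrite ler_pdivlMr // lt0r N_neq0 /=.
have := calH_refines_gap_ge adj hP hQ hQP (mulr_ge0 (ler0n _ 2) hx).
have := ler_wpM2l hx dev_ge.
rewrite -/N -/p -!mulrA; nra.
Qed.
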